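(* Consider the DS-PSRL algorithm with parameters sampled at times $1,2,4,8,\dots$. Let $m$ be the number of episodes up to time $T$, $M_j$ the number of steps of episode $j$, $N_j$ one plus the number of steps in the first $j$ episodes (so $N_0=1$, $N_j=N_{j-1}+M_j$), and $\widetilde\theta_j$ the parameter sampled for episode $j$. Suppose there is a constant $C'$ with $\max_j\mathbb{E}\big[N_{j-1}|\theta_*-\widetilde\theta_j|^2\big]\le C'\log T$. Then \[ \mathbb{E}\Big[\sum_{j=1}^m M_j|\theta_*-\widetilde\theta_j|^2\Big]\le 2C'\log^2T. \]
   Context: Setting: parametrized MDP with scalar unknown parameter $\theta_*\in\Theta\subseteq\mathbb{R}$ drawn from a known prior. DS-PSRL: set $L=1$; at each step $t$, if $t=L$ sample $\widetilde\theta_t$ from the current posterior of $\theta_*$ and set $L\leftarrow2L$, else keep $\widetilde\theta_t=\widetilde\theta_{t-1}$; act optimally for parameter $\widetilde\theta_t$ and update the posterior with the observed transition. An episode is a maximal run of steps with the same sampled parameter. *)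

From HB Require Import structures.
From mathcomp Require Import all_boot all_order all_algebra.
From mathcomp Require Import all_classical all_reals all_analysis.
Set Implicit Arguments. Unset Strict Implicit. Unset Printing Implicit Defensive.
Import Order.TTheory GRing.Theory Num.Theory.
Local Open Scope ring_scope.

(* DS-PSRL resampling schedule.  [dsL n] is the value of the counter L when
   step t = n.+1 is processed: L = 1 at step 1; after step t, if t = L then
   L <- 2L (a new parameter was sampled at step t). *)
Fixpoint dsL (n : nat) : nat :=
  match n with
  | 0 => 1
  | n'.+1 => if n'.+1 == dsL n' then (dsL n').*2 else dsL n'
  end.

Definition sample_time (t : nat) : bool := (0 < t)%N && (t == dsL t.-1).

Definition episode_of (t : nat) : nat := (\sum_(1 <= s < t.+1) sample_time s)%N.

Definition num_episodes (T : nat) : nat := episode_of T.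

Definition ep_len (T j : nat) : nat :=
  (\sum_(1 <= t < T.+1) (episode_of t == j))%N.

Definition ep_N (T j : nat) : nat := (1 + \sum_(1 <= i < j.+1) ep_len T i)%N.

Definition log2 {R : realType} (x : R) : R := ln x / ln 2.

(* Parameters are resampled exactly at the powers of two, so episode j covers
   the steps in [2^(j-1), 2^j), there are m = floor(log2 T) + 1 episodes, and
   the length M_j of episode j is at most 2^(j-1) <= N_(j-1).  Hence
   E[sum_j M_j |theta_* - theta_j|^2] <= sum_j E[N_(j-1) |theta_* - theta_j|^2]
   <= m C' log2 T, and m <= 2 log2 T as soon as T >= 2. *)

From HB Require Import structures.
From mathcomp Require Import all_boot all_order all_algebra.
From mathcomp Require Import all_classical all_reals all_analysis.
From mathcomp Require Import measurable_realfun measurable_fun_approximation.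
From mathcomp Require Import zify lra.
Import Order.TTheory GRing.Theory Num.Theory.

Lemma trunc_log2_succ n : (0 < n)%N ->
  trunc_log 2 n.+1 = (trunc_log 2 n + (n.+1 == 2 ^ (trunc_log 2 n).+1))%N.
Proof.
move=> n_gt0; set e := trunc_log 2 n.
have lo : (2 ^ e <= n)%N by exact: trunc_logP.
have hi : (n < 2 ^ e.+1)%N by exact: trunc_log_ltn.
have [->|ne] := eqVneq n.+1 (2 ^ e.+1); first by rewrite trunc_expnK // addn1.
by rewrite addn0; apply: trunc_log_eq => //; rewrite ltn_neqAle ne hi; lia.
Qed.

Lemma dsLE t : dsL t = (2 ^ up_log 2 t.+1)%N.
Proof.
elim: t => [|t IH]; first by rewrite up_log1.
rewrite /= IH; case: t IH => [|t] _; first by rewrite up_log1 up_lognn.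
rewrite !up_log_trunc_log // -!pred_Sn (trunc_log2_succ t.+1) //.
by case: eqP => _; rewrite ?addn1 ?addn0 // -mul2n -expnS.
Qed.

Lemma episode_ofE t : episode_of t.+1 = (trunc_log 2 t.+1).+1.
Proof.
elim: t => [|t IH]; first by rewrite /episode_of big_nat1 trunc_log1.
rewrite /episode_of big_nat_recr //= -/(episode_of t.+1) IH.
rewrite /sample_time -pred_Sn dsLE up_log_trunc_log // -pred_Sn.
by rewrite (trunc_log2_succ t.+1).
Qed.

Lemma episode_of_eq t j : (0 < t)%N -> (0 < j)%N ->
  (episode_of t == j) = (2 ^ j.-1 <= t < 2 ^ j)%N.
Proof.
case: t => // t _; case: j => // j _.
rewrite episode_ofE eqSS /=.
apply/eqP/andP => [<-|]; first by split; [exact: trunc_logP | exact: trunc_log_ltn].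
by move=> lohi; apply: trunc_log_eq => //; apply/andP.
Qed.

Lemma sum_nat_mem_itv n a b : (0 < a <= b)%N ->
  (\sum_(1 <= t < n) (a <= t < b) = minn n b - minn n a)%N.
Proof.
move=> ab; elim: n => [|n IH]; first by rewrite big_geq //; lia.
case: n IH => [|n] IH; first by rewrite big_geq //; lia.
by rewrite big_nat_recr //= IH; case: (boolP (a <= n.+1 < b)%N) => /=; lia.
Qed.

Lemma ep_lenE T j : (0 < j)%N ->
  ep_len T j = (minn T.+1 (2 ^ j) - minn T.+1 (2 ^ j.-1))%N.
Proof.
case: j => // j _; rewrite /ep_len -sum_nat_mem_itv; last first.
  by rewrite expn_gt0 /= expnS; lia.
by apply: eq_big_nat => t /andP[t_gt0 _]; rewrite episode_of_eq.
Qed.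

Lemma ep_NE T j : ep_N T j = minn T.+1 (2 ^ j).
Proof.
rewrite /ep_N; elim: j => [|j IH]; first by rewrite big_geq //; lia.
rewrite big_nat_recr // addnA IH ep_lenE // expnS /=.
have := expn_gt0 2 j; lia.
Qed.

Lemma ep_len0 T : ep_len T 0 = 0%N.
Proof. by apply: big1_seq => -[|t] /andP[_]; rewrite mem_index_iota // episode_ofE. Qed.

Lemma ep_len_le_ep_N T j : (ep_len T j <= ep_N T j.-1)%N.
Proof.
case: j => [|j]; first by rewrite ep_len0.
rewrite ep_lenE // ep_NE /= expnS.
have := expn_gt0 2 j; lia.
Qed.

Lemma num_episodesE T : (0 < T)%N -> num_episodes T = (trunc_log 2 T).+1.
Proof. by case: T => // T _; exact: episode_ofE. Qed.

Local Open Scope ring_scope.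

Lemma trunc_log2_le_log2 {R : realType} n : (0 < n)%N ->
  (trunc_log 2 n)%:R <= log2 (n%:R : R).
Proof.
move=> n_gt0; have ln2_gt0 : 0 < ln (2 : R) by apply: ln_gt0; lra.
rewrite /log2 ler_pdivlMr // mulr_natl -lnXn; last by lra.
rewrite ler_ln ?posrE ?exprn_gt0 ?ltr0n // -natrX ler_nat.
exact: trunc_logP.
Qed.

Lemma num_episodes_le_log2 {R : realType} T : (1 < T)%N ->
  (num_episodes T)%:R <= 2 * log2 (T%:R : R).
Proof.
move=> T_gt1; rewrite num_episodesE ?(ltnW T_gt1) // -natr1.
have le_log2 : (trunc_log 2 T)%:R <= log2 (T%:R : R).
  by apply/trunc_log2_le_log2/ltnW.
have ge1 : 1 <= (trunc_log 2 T)%:R :> R by rewrite ler1n trunc_log_gt0.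
lra.
Qed.

Lemma ge0_integral_weighted_sum_le {d} {T : measurableType d} {R : realType}
    (mu : {measure set T -> \bar R}) {D : set T} {I : Type} (s : seq I)
    {f : I -> T -> R} (a b : I -> R) :
  measurable D ->
  (forall i, measurable_fun D (f i)) ->
  (forall i x, D x -> 0 <= f i x) ->
  (forall i, 0 <= a i <= b i) ->
  (\int[mu]_(x in D) (\sum_(i <- s) a i * f i x)%:E
    <= \sum_(i <- s) \int[mu]_(x in D) (b i * f i x)%:E)%E.
Proof.
move=> mD mf f_ge0 ab.
have mwf (w : I -> R) i : measurable_fun D (fun x => w i * f i x).
  by apply: measurable_funM => //; exact: measurable_cst.
have wf_ge0 (w : I -> R) i x : 0 <= w i -> D x -> 0 <= w i * f i x.
  by move=> w0 Dx; exact: mulr_ge0 (f_ge0 _ _ Dx).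
have [a_ge0 b_ge0] : (forall i, 0 <= a i) /\ (forall i, 0 <= b i).
  by split=> i; have /andP[a0 ab_i] := ab i; [|exact: le_trans ab_i].
rewrite -ge0_integral_sum //; last first.
- by move=> i x Dx; rewrite lee_fin wf_ge0.
- by move=> i; apply/measurable_EFinP; exact: mwf.
apply: ge0_le_integral => //.
- by move=> x Dx; rewrite lee_fin sumr_ge0 // => i _; rewrite wf_ge0.
- by apply/measurable_EFinP; apply: measurable_sum => i; exact: mwf.
- by apply: emeasurable_sum => i; apply/measurable_EFinP; exact: mwf.
move=> x Dx; rewrite sumEFin lee_fin ler_sum // => i _.
by apply: (ler_wpM2r (f_ge0 _ _ Dx)); have /andP[] := ab i.
Qed.

Theorem lemma4 (d : measure_display) (Omega : measurableType d) (R : realType)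
  (P : probability Omega R)
  (theta_star : Omega -> R) (theta_tilde : nat -> Omega -> R)
  (T : nat) (C' : R) :
  (1 <= T)%N ->
  measurable_fun setT theta_star ->
  (forall j, measurable_fun setT (theta_tilde j)) ->
  (forall j, (1 <= j <= num_episodes T)%N ->
     (\int[P]_w (((ep_N T j.-1)%:R * (theta_star w - theta_tilde j w) ^+ 2)%:E)
       <= (C' * log2 (T%:R : R))%:E)%E) ->
  (\int[P]_w ((\sum_(1 <= j < (num_episodes T).+1)
        (ep_len T j)%:R * (theta_star w - theta_tilde j w) ^+ 2)%:E)
    <= (2 * C' * (log2 (T%:R : R)) ^+ 2)%:E)%E.
Proof.
move=> T_gt0 m_star m_tilde episode_bound.
set m := num_episodes T; set L := log2 (T%:R : R).
pose err j w := (theta_star w - theta_tilde j w) ^+ 2.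
have m_err j : measurable_fun setT (err j).
  by apply: measurable_funX; exact: measurable_funB m_star (m_tilde j).
have err_ge0 j w : setT w -> 0 <= err j w by move=> _; exact: sqr_ge0.
have CL_ge0 : 0 <= C' * L.
  rewrite -lee_fin; apply: le_trans (episode_bound 1%N _); last first.
    by rewrite leqnn num_episodesE.
  by apply: integral_ge0 => w _; rewrite lee_fin mulr_ge0 ?sqr_ge0.
apply: le_trans (ge0_integral_weighted_sum_le P (index_iota 1 m.+1)
  (fun j => (ep_len T j)%:R) (fun j => (ep_N T j.-1)%:R) measurableT m_err err_ge0 _) _.
  by move=> j; rewrite ler0n ler_nat ep_len_le_ep_N.
apply: (@le_trans _ _ (\sum_(1 <= j < m.+1) (C' * L)%:E)%E).
  rewrite big_nat_cond [leRHS]big_nat_cond; apply: lee_sum => j.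
  by rewrite andbT => /andP[j_ge1 j_le]; apply: episode_bound; rewrite j_ge1 -ltnS.
rewrite sumEFin lee_fin sumr_const_nat subn1 -[_ *+ m]mulr_natr.
have [T1|T_gt1] : T = 1%N \/ (1 < T)%N by lia.
  have -> : L = 0 by rewrite /L T1 /log2 ln1 mul0r.
  by rewrite expr0n !mulr0.
have := num_episodes_le_log2 (R := R) _ T_gt1; rewrite -/m -/L; nra.
Qed.
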